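(* Let $[X,d,m]$ be a metric random walk space with invariant and reversible measure $\nu$ under the standing assumptions below, let $\Omega\subset X$ be a bounded $\nu$-measurable set with $0<\nu(\Omega)<\nu(X)$, let $\psi\in L^\infty(\partial_m\Omega,\nu)$ and $p>1$. If $(m,\nu)$ satisfies a $p$-Poincaré inequality in $\Omega$, then there exists $u_p\in L^p(\Omega,\nu)$ such that $$-\int_{\Omega_m}|(u_p)_\psi(y)-u_p(x)|^{p-2}\big((u_p)_\psi(y)-u_p(x)\big)\,dm_x(y)=0\quad\text{for }\nu\text{-a.e. }x\in\Omega,$$ and moreover $\|u_p\|_{L^\infty(\Omega,\nu)}\le\|\psi\|_{L^\infty(\partial_m\Omega,\nu)}$.
   Context: A metric random walk space $[X,d,m]$ is a Polish metric space $(X,d)$ with a family $m=(m_x)_{x\in X}$ of Borel probability measures such that $x\mapsto m_x(A)$ is Borel measurable for every Borel $A$ and each $m_x$ has finite first moment. $\nu$ is invariant: $\nu(A)=\int_X m_x(A)\,d\nu(x)$ for all $\nu$-measurable $A$; reversible: $dm_x(y)\,d\nu(x)=dm_y(x)\,d\nu(y)$. Standing assumptions: $(X,d,\nu)$ is $\sigma$-finite, $\nu(X)<\infty$, $\nu$ ergodic (every Borel $B$ with $m_x(B)=1$ for all $x\in B$ has $\nu(B)\in\{0,\nu(X)\}$). $\partial_m\Omega:=\{x\in X\setminus\Omega: m_x(\Omega)>0\}$, $\Omega_m:=\Omega\cup\partial_m\Omega$. For $w:\Omega\to\mathbb{R}$, $w_\psi:\Omega_m\to\mathbb{R}$ equals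 $w$ on $\Omega$ and $\psi$ on $\partial_m\Omega$. For $q\ge1$, $(m,\nu)$ satisfies a $q$-Poincaré inequality in $\Omega$ if there is $\lambda>0$ such that $\lambda\int_\Omega|u(x)|^q\,d\nu(x)\le\int_\Omega\int_{\Omega_m}|u_\psi(y)-u(x)|^q\,dm_x(y)\,d\nu(x)+\int_{\partial_m\Omega}|\psi(y)|^q\,d\nu(y)$ for all $u\in L^q(\Omega,\nu)$ and all $\psi\in L^q(\partial_m\Omega,\nu)$. *)

From HB Require Import structures.
From mathcomp Require Import all_boot all_order all_algebra.
From mathcomp Require Import all_classical all_reals all_analysis.
Set Implicit Arguments. Unset Strict Implicit. Unset Printing Implicit Defensive.
Import Order.TTheory GRing.Theory Num.Theory.
Import numFieldNormedType.Exports.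
Local Open Scope classical_set_scope.
Local Open Scope ring_scope.

Section MRW.
Context {R : realType} {d : measure_display} {X : measurableType d}.

Definition is_metric (dist : X -> X -> R) : Prop :=
  (forall x y, 0 <= dist x y) /\ (forall x y, dist x y = 0 <-> x = y) /\
  (forall x y, dist x y = dist y x) /\
  (forall x y z, dist x z <= dist x y + dist y z).

Definition dopen (dist : X -> X -> R) (A : set X) : Prop :=
  forall x, A x -> exists2 e : R, 0 < e & [set y | dist x y < e] `<=` A.

Definition dcomplete (dist : X -> X -> R) : Prop :=
  forall u : nat -> X,
    (forall e : R, 0 < e -> exists N, forall n k, (N <= n)%N -> (N <= k)%N ->
        dist (u n) (u k) < e) ->
    exists l, forall e : R, 0 < e -> exists N, forall n, (N <= n)%N -> dist (u n) l < e.

Definition dseparable (dist : X -> X -> R) : Prop :=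
  exists D : set X, countable D /\
    forall x (e : R), 0 < e -> exists2 y, D y & dist x y < e.

Definition dborel (dist : X -> X -> R) : Prop :=
  (@measurable d X) = <<s dopen dist >>.

Definition polish_metric (dist : X -> X -> R) : Prop :=
  [/\ is_metric dist, dcomplete dist, dseparable dist & dborel dist].

Local Open Scope ereal_scope.

(* metric random walk space [X,d,m]: m is a probability kernel (so x |-> m_x(A)
   is measurable) whose measures have finite first moment *)
Definition metric_random_walk_space (dist : X -> X -> R) (m : R.-pker X ~> X) : Prop :=
  polish_metric dist /\
  forall x, \int[m x]_y (dist x y)%:E < +oo.

Definition invariant_measure (m : R.-pker X ~> X) (nu : {measure set X -> \bar R}) : Prop :=
  forall A, measurable A -> nu A = \int[nu]_x m x A.

(* dm_x(y) dnu(x) = dm_y(x) dnu(y) as measures on X x X, i.e. on rectangles *)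
Definition reversible_measure (m : R.-pker X ~> X) (nu : {measure set X -> \bar R}) : Prop :=
  forall A B, measurable A -> measurable B ->
    \int[nu]_(x in A) m x B = \int[nu]_(y in B) m y A.

Definition ergodic_measure (m : R.-pker X ~> X) (nu : {measure set X -> \bar R}) : Prop :=
  forall B, measurable B -> (forall x, B x -> m x B = 1) ->
    nu B = 0 \/ nu B = nu setT.

Definition dbounded (dist : X -> X -> R) (A : set X) : Prop :=
  exists x0 (r : R), forall x, A x -> (dist x0 x <= r)%R.

Definition mboundary (m : R.-pker X ~> X) (O : set X) : set X :=
  [set x | ~ O x /\ 0 < m x O].

Definition mclosure (m : R.-pker X ~> X) (O : set X) : set X :=
  O `|` mboundary m O.

Definition wpsi (O : set X) (w psi : X -> R) : X -> R :=
  fun x => if x \in O then w x else psi x.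

(* L^q(D, nu), functions represented as functions on X, only values on D matter *)
Definition Lp_on (nu : {measure set X -> \bar R}) (D : set X) (q : R) (u : X -> R) : Prop :=
  measurable_fun D u /\ \int[nu]_(x in D) ((`|u x| `^ q)%R)%:E < +oo.

Definition Linf_on (nu : {measure set X -> \bar R}) (D : set X) (u : X -> R) : Prop :=
  measurable_fun D u /\ exists c : R, {ae nu, forall x, D x -> (`|u x| <= c)%R}.

Definition Linf_norm (nu : {measure set X -> \bar R}) (D : set X) (u : X -> R) : \bar R :=
  ereal_inf [set y : \bar R | {ae nu, forall x, D x -> (`|u x|)%:E <= y}].

Definition poincare_ineq (m : R.-pker X ~> X) (nu : {measure set X -> \bar R})
    (O : set X) (q : R) : Prop :=
  exists2 lam : R, (0 < lam)%R &
    forall u psi, Lp_on nu O q u -> Lp_on nu (mboundary m O) q psi ->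
      lam%:E * \int[nu]_(x in O) ((`|u x| `^ q)%R)%:E <=
      \int[nu]_(x in O) \int[m x]_(y in mclosure m O)
          ((`|wpsi O u psi y - u x| `^ q)%R)%:E
      + \int[nu]_(y in mboundary m O) ((`|psi y| `^ q)%R)%:E.

End MRW.

(* Let [phi t = |t|^(p-2) t] and [plap w x t = \int_{O_m} phi (w y - t) dm_x(y)], which is
   continuous and nonincreasing in [t].  When [psi] is bounded by [M], the map sending [u] to the
   root in [[-M, M]] of [t |-> plap u_psi x t] (located by bisection, hence measurable in [x]) is
   monotone in [u]; iterating it from the constant [-M] gives a nondecreasing sequence whose limit
   [u] satisfies [plap u_psi x (u x) = 0] for every [x] and [|u| <= M].  Take for [M] the essential
   supremum of [|psi|] on the m-boundary, which is finite and nonnegative because the Poincare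
   inequality forces the m-boundary to have positive measure, and replace [psi] by its truncation
   at level [M]: the two differ on a nu-null set, hence, by reversibility, on an m_x-null set for
   nu-almost every [x] in [O], which does not affect the equation. *)

From HB Require Import structures.
From mathcomp Require Import all_boot all_order all_algebra.
From mathcomp Require Import all_classical all_reals all_analysis.
From mathcomp Require Import measurable_realfun lra.
Import Order.TTheory GRing.Theory Num.Theory.
Import numFieldNormedType.Exports.
Set Implicit Arguments. Unset Strict Implicit. Unset Printing Implicit Defensive.
Local Open Scope classical_set_scope.
Local Open Scope ring_scope.

Lemma powR_continuous_at {R : realType} (q a : R) : 0 < a ->
  {for a, continuous (fun x : R => x `^ q)}.
Proof.
move=> a0; apply/differentiable_continuous/derivable1_diffP.
by apply: derivable_powR; rewrite in_itv/= a0.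
Qed.

Section phi.
Context {R : realType} (p : R) (p1 : 1 < p).

Definition phi (t : R) : R := `|t| `^ (p - 2) * t.

Let p_sub2 : p - 2 = (p - 1) - 1.
Proof. by rewrite -addrA -opprD. Qed.

Let p1_gt0 : 0 < p - 1. Proof. by rewrite subr_gt0. Qed.
Let p1_ge0 : 0 <= p - 1. Proof. exact: ltW. Qed.

Lemma ger0_phi t : 0 <= t -> phi t = t `^ (p - 1).
Proof. by move=> t0; rewrite /phi (ger0_norm t0) mulrC p_sub2 mulr_powRB1. Qed.

Lemma ler0_phi t : t <= 0 -> phi t = - (- t) `^ (p - 1).
Proof.
move=> t0; rewrite /phi (ler0_norm t0) p_sub2.
by rewrite -(@mulr_powRB1 _ (- t)) ?oppr_ge0// mulNr opprK mulrC.
Qed.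

Lemma normr_phi t : `|phi t| = `|t| `^ (p - 1).
Proof. by rewrite /phi normrM ger0_norm ?powR_ge0// mulrC p_sub2 mulr_powRB1. Qed.

Lemma phi_ge0 t : 0 <= t -> 0 <= phi t.
Proof. by move=> t0; rewrite ger0_phi// powR_ge0. Qed.

Lemma phi_le0 t : t <= 0 -> phi t <= 0.
Proof. by move=> t0; rewrite ler0_phi// oppr_le0 powR_ge0. Qed.

Lemma nondecreasing_phi : {homo phi : s t / s <= t}.
Proof.
move=> s t st; have [s0|s0] := leP 0 s.
  have t0 := le_trans s0 st.
  by rewrite !ger0_phi//; apply: ge0_ler_powR; rewrite ?nnegrE.
have [t0|t0] := leP 0 t; first by rewrite (le_trans (phi_le0 (ltW s0))) ?phi_ge0.
rewrite (ler0_phi (ltW s0)) (ler0_phi (ltW t0)) lerN2.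
by apply: ge0_ler_powR; rewrite ?nnegrE ?oppr_ge0 ?lerN2// ltW.
Qed.

Lemma normr_phi_le t C : `|t| <= C -> `|phi t| <= C `^ (p - 1).
Proof.
move=> tC; have C0 : 0 <= C := le_trans (normr_ge0 t) tC.
by rewrite normr_phi; apply: ge0_ler_powR; rewrite ?nnegrE.
Qed.

Lemma continuous_phi : continuous phi.
Proof.
move=> t; have [t0|t0|->] := ltgtP t 0.
- have e : {near t, (fun s => - (- s) `^ (p - 1)) =1 phi}.
    by near=> s; rewrite ler0_phi// ltW//; near: s; exact: lt_nbhsl.
  apply: cvg_trans (near_eq_cvg e) _; rewrite ler0_phi ?ltW//; apply: cvgN.
  apply: (continuous_comp (f := -%R) (g := fun s : R => s `^ (p - 1))).
    exact: cvgN.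
  by apply: powR_continuous_at; rewrite oppr_gt0.
- have e : {near t, (fun s => s `^ (p - 1)) =1 phi}.
    by near=> s; rewrite ger0_phi// ltW//; near: s; exact: lt_nbhsr.
  apply: cvg_trans (near_eq_cvg e) _; rewrite ger0_phi ?ltW//.
  exact: powR_continuous_at.
- (* at 0, [|phi s| = |s|^(p-1)] is small when [|s| < e^(1/(p-1))] *)
  rewrite /continuous_at {2}/phi mulr0; apply/cvgrPdist_lt => e e0.
  have d0 : 0 < e `^ (p - 1)^-1 by rewrite powR_gt0.
  near=> s; rewrite sub0r normrN normr_phi.
  have -> : e = (e `^ (p - 1)^-1) `^ (p - 1).
    by rewrite -powRrM mulVf ?gt_eqF// powRr1// ltW.
  apply: gt0_ltr_powR; rewrite ?nnegrE ?(ltW d0)//; near: s; exact: nbhs0_lt.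
Unshelve. all: by end_near.
Qed.

Lemma measurable_phi : measurable_fun setT phi.
Proof. exact: continuous_measurable_fun continuous_phi. Qed.

End phi.

Lemma measurable_fun_wpsi {R : realType} {d : measure_display} {X : measurableType d}
    (A O : set X) (u psi : X -> R) : measurable A -> measurable O ->
  measurable_fun (A `&` O) u -> measurable_fun (A `\` O) psi ->
  measurable_fun A (wpsi O u psi).
Proof.
move=> mA mO mu mpsi.
have inO b : (fun x => x \in O) @^-1` [set b] = if b then O else ~` O.
  apply/seteqP; case: b; split=> x /=;
    [exact: set_mem|exact: mem_set|by move=> xO /mem_set; rewrite xO|exact: memNset].
apply: measurable_fun_if => //; rewrite ?inO ?setDE//.
by apply: (measurable_fun_bool true); rewrite inO; exact: measurableI.
Qed.

Section integrals.
Context {R : realType} {d : measure_display} {X : measurableType d}.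
Variables (mu : {measure set X -> \bar R}) (D : set X) (mD : measurable D).
Hypothesis muD : (mu D < +oo)%E.

Lemma bounded_integrable (f : X -> R) (C : R) : measurable_fun D f ->
  (forall y, D y -> `|f y| <= C) -> mu.-integrable D (EFin \o f).
Proof.
move=> mf fC; apply: measurable_bounded_integrable => //; rewrite /bounded_near; near=> C'.
have CC' : C <= C' by near: C'; apply: nbhs_pinfty_ge; rewrite num_real.
by move=> y Dy /=; apply: le_trans (fC y Dy) CC'.
Unshelve. all: by end_near.
Qed.

Lemma cvg_integral_phi (p : R) (f_ : nat -> X -> R) (f : X -> R) (C : R) :
  1 < p -> (forall n, measurable_fun D (f_ n)) ->
  (forall n y, D y -> `|f_ n y| <= C) -> (forall y, D y -> f_ ^~ y @ \oo --> f y) ->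
  (\int[mu]_(y in D) (phi p (f_ n y))%:E)%E @[n --> \oo] -->
  (\int[mu]_(y in D) (phi p (f y))%:E)%E.
Proof.
move=> p1 mf fC cvf.
apply: (@dominated_cvg _ _ _ mu D mD _ _ (fun=> (C `^ (p - 1))%:E)).
- move=> n; apply/measurable_EFinP.
  exact: measurableT_comp (measurable_phi p1) (mf n).
- move=> y Dy; apply: cvg_EFin; first exact: nearW.
  exact: (continuous_cvg _ (@continuous_phi _ _ p1 (f y)) (cvf y Dy)).
- by [].
- by apply: (@bounded_integrable (cst (C `^ (p - 1))) (C `^ (p - 1))) => // y _;
    rewrite ger0_norm ?powR_ge0.
- by move=> n y Dy /=; rewrite lee_fin; apply: normr_phi_le => //; exact: fC.
Qed.

Lemma integrable_ae_eq (f g : X -> \bar R) :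
  ae_eq mu D f g -> measurable_fun D g -> mu.-integrable D f -> mu.-integrable D g.
Proof.
move=> fg mg /integrableP[mf fint]; apply/integrableP; split=> //.
rewrite -(ae_eq_integral _ _ mD _ _ (ae_eq_abse fg)) => //; exact: measurableT_comp.
Qed.

Lemma bounded_Lp_on (p M : R) (u : X -> R) :
  0 <= p -> measurable_fun D u -> (forall x, D x -> `|u x| <= M) ->
  Lp_on mu D p u.
Proof.
move=> p0 mu_ uM; split=> //.
have M0 x : D x -> 0 <= M by move=> Dx; exact: le_trans (normr_ge0 _) (uM x Dx).
apply: (@le_lt_trans _ _ (\int[mu]_(x in D) (M `^ p)%:E)%E).
  apply: ge0_le_integral => //.
  - apply/measurable_EFinP; apply: measurableT_comp (measurable_powR p) _.
    exact: measurableT_comp (@normr_measurable R setT) mu_.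
  - by move=> x Dx; rewrite lee_fin ge0_ler_powR ?nnegrE ?uM ?(M0 x Dx).
by rewrite integral_cst // lte_mul_pinfty // lee_fin powR_ge0.
Qed.

End integrals.

Definition bounded_measurable {R : realType} {d : measure_display}
    {X : measurableType d} (M : R) (w : X -> R) : Prop :=
  measurable_fun setT w /\ forall y, `|w y| <= M.

Section plap.
Context {R : realType} {d : measure_display} {X : measurableType d}.
Variables (m : R.-pker X ~> X) (p : R) (p1 : 1 < p) (D : set X) (mD : measurable D).

Definition plap (w : X -> R) (x : X) (t : R) : \bar R :=
  (\int[m x]_(y in D) (phi p (w y - t))%:E)%E.

Let mxD_fin x : (m x D < +oo)%E.
Proof.
apply: (@le_lt_trans _ _ (m x setT)); last by rewrite prob_kernel ltry.
by apply: le_measure; rewrite ?inE.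
Qed.

Let normr_subr_le (M a b : R) : `|a| <= M -> `|b| <= M -> `|a - b| <= M + M.
Proof. by move=> aM bM; apply: le_trans (ler_normB _ _) _; exact: lerD. Qed.

Lemma measurable_plap (w c : X -> R) : measurable_fun setT w ->
  measurable_fun setT c -> measurable_fun setT (fun x => plap w x (c x)).
Proof.
move=> mw mc.
pose k z := ((phi p (w z.2 - c z.1)) * \1_D z.2)%:E.
have mk : measurable_fun setT k.
  apply/measurable_EFinP; apply: measurable_funM.
  - apply: measurableT_comp (measurable_phi p1) _; apply: measurable_funB.
    + exact: measurableT_comp mw measurable_snd.
    + exact: measurableT_comp mc measurable_fst.
  - exact: measurableT_comp (measurable_indic mD) measurable_snd.
have -> : (fun x => plap w x (c x)) = (fun x => \int[m x]_y k (x, y))%E.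
  apply/funext => x; rewrite /plap integral_mkcond; apply: eq_integral => y _.
  by rewrite /k /= /restrict /patch indicE; case: (y \in D); rewrite ?mulr1 ?mulr0.
have -> : (fun x => \int[m x]_y k (x, y))%E =
    (fun x => \int[m x]_y k^\+ (x, y) - \int[m x]_y k^\- (x, y))%E.
  apply/funext => x; rewrite [LHS]integralE.
  by congr (_ - _)%E; apply: eq_integral => y _; rewrite ?funeposE ?funenegE.
apply: emeasurable_funB.
- apply: (measurable_fun_integral_finite_kernel (k^\+)%E m); last exact: measurable_funepos.
  by move=> z; rewrite funeposE le_max lexx orbT.
- apply: (measurable_fun_integral_finite_kernel (k^\-)%E m); last exact: measurable_funeneg.
  by move=> z; rewrite funenegE le_max lexx orbT.
Qed.

Lemma cvg_plap (M : R) (w_ : nat -> X -> R) (w : X -> R) (t_ : nat -> R) (t : R) x :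
  (forall n, bounded_measurable M (w_ n)) -> (forall n, `|t_ n| <= M) ->
  (forall y, D y -> w_ ^~ y @ \oo --> w y) -> t_ @ \oo --> t ->
  plap (w_ n) x (t_ n) @[n --> \oo] --> plap w x t.
Proof.
move=> bw bt cvw cvt.
apply: (@cvg_integral_phi _ _ _ _ _ mD (mxD_fin x) _ (fun n y => w_ n y - t_ n) _ (M + M)) => //.
- by move=> n; apply: measurable_funB; [exact: measurable_funTS (bw n).1|exact: measurable_cst].
- by move=> n y _; apply: normr_subr_le; [exact: (bw n).2|exact: bt].
- by move=> y Dy; apply: cvgB; [exact: cvw|exact: cvt].
Qed.

Lemma plap_ge0_lim (M : R) (w_ : nat -> X -> R) (w : X -> R) (t_ : nat -> R) (t : R) x :
  (forall n, bounded_measurable M (w_ n)) -> (forall n, `|t_ n| <= M) ->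
  (forall y, D y -> w_ ^~ y @ \oo --> w y) -> t_ @ \oo --> t ->
  (\forall n \near \oo, 0 <= plap (w_ n) x (t_ n))%E -> (0 <= plap w x t)%E.
Proof.
move=> bw bt cvw cvt ge0; have cv := cvg_plap (x := x) bw bt cvw cvt.
by rewrite -(cvg_lim _ cv)//; apply: lime_ge => //; apply/cvg_ex; exists (plap w x t).
Qed.

Lemma plap_le0_lim (M : R) (w_ : nat -> X -> R) (w : X -> R) (t_ : nat -> R) (t : R) x :
  (forall n, bounded_measurable M (w_ n)) -> (forall n, `|t_ n| <= M) ->
  (forall y, D y -> w_ ^~ y @ \oo --> w y) -> t_ @ \oo --> t ->
  (\forall n \near \oo, plap (w_ n) x (t_ n) <= 0)%E -> (plap w x t <= 0)%E.
Proof.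
move=> bw bt cvw cvt le0; have cv := cvg_plap (x := x) bw bt cvw cvt.
by rewrite -(cvg_lim _ cv)//; apply: lime_le => //; apply/cvg_ex; exists (plap w x t).
Qed.

Section root.
Variables (M : R) (M0 : 0 <= M).

Lemma plap_integrable w x t : bounded_measurable M w -> `|t| <= M ->
  (m x).-integrable D (fun y => (phi p (w y - t))%:E).
Proof.
move=> [mw bw] tM.
apply: (@bounded_integrable _ _ _ _ _ mD (mxD_fin x) _ ((M + M) `^ (p - 1))).
- apply: measurableT_comp (measurable_phi p1) _.
  by apply: measurable_funB => //; exact: measurable_funTS.
- by move=> y _; apply: normr_phi_le => //; exact: normr_subr_le.
Qed.

Lemma plap_nonincreasing w x s t : bounded_measurable M w ->
  `|s| <= M -> `|t| <= M -> s <= t -> (plap w x t <= plap w x s)%E.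
Proof.
move=> bw sM tM st; apply: le_integral => //; try exact: plap_integrable.
by move=> y _; rewrite lee_fin; apply: (nondecreasing_phi p1); rewrite lerD2l lerN2.
Qed.

Lemma plap_le_datum w w' x t : bounded_measurable M w -> bounded_measurable M w' ->
  `|t| <= M -> (forall y, D y -> w y <= w' y) -> (plap w x t <= plap w' x t)%E.
Proof.
move=> bw bw' tM ww'; apply: le_integral => //; try exact: plap_integrable.
by move=> y /set_mem Dy; rewrite lee_fin; apply: (nondecreasing_phi p1); rewrite lerD2r ww'.
Qed.

Lemma plap_ge0_lower w x : (forall y, `|w y| <= M) -> (0 <= plap w x (- M))%E.
Proof.
move=> bw; apply: integral_ge0 => y _; rewrite lee_fin; apply: (phi_ge0 p1).
by have := bw y; rewrite ler_norml => /andP[]; lra.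
Qed.

Lemma plap_le0_upper w x : bounded_measurable M w -> (plap w x M <= 0)%E.
Proof.
move=> bw; rewrite -(integral0 (m x) D); apply: le_integral => //.
- by apply: plap_integrable; rewrite ?ger0_norm.
- exact: integrable0.
- move=> y _; rewrite lee_fin; apply: (phi_le0 p1).
  by have := bw.2 y; rewrite ler_norml => /andP[]; lra.
Qed.

Lemma plap_le0_right w x t : bounded_measurable M w -> `|t| <= M ->
  (forall s, t < s -> s <= M -> (plap w x s <= 0)%E) -> (plap w x t <= 0)%E.
Proof.
move=> bw tM le0; have /andP[Mt] : - M <= t <= M by rewrite -ler_norml.
rewrite le_eqVlt => /predU1P[->|tltM]; first exact: plap_le0_upper.
pose a := (M - t) / 2; pose s n := t + geometric a 2^-1 n.
have a_gt0 : 0 < a by rewrite divr_gt0 // subr_gt0.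
have g_gt0 n : 0 < geometric a 2^-1 n by rewrite /geometric mulr_gt0 // exprn_gt0.
have g_le n : geometric a 2^-1 n <= a.
  by apply: ler_piMr; [exact: ltW|apply: exprn_ile1; lra].
have s_gt n : t < s n by rewrite ltrDl.
have s_le n : s n <= M by have := g_le n; rewrite /s /a; lra.
apply: (@plap_le0_lim M (fun=> w) w s) => //.
- by move=> n; rewrite ler_norml s_le andbT; apply: le_trans Mt (ltW (s_gt n)).
- by move=> y _; exact: cvg_cst.
- rewrite -[X in _ --> X]addr0; apply: cvgD; first exact: cvg_cst.
  by apply: cvg_geometric; rewrite ger0_norm//; lra.
- by near=> n; exact: le0.
Unshelve. all: by end_near.
Qed.

Definition bisect_step w x (ab : R * R) : R * R :=
  let c := (ab.1 + ab.2) / 2 in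
  if (0 <= plap w x c)%E then (c, ab.2) else (ab.1, c).

Definition bisect w x k : R * R := iter k (bisect_step w x) (- M, M).

Lemma bisect_invariant w x k : (forall y, `|w y| <= M) ->
  [/\ - M <= (bisect w x k).1 <= (bisect w x k).2, (bisect w x k).2 <= M,
      (bisect w x k).2 - (bisect w x k).1 = (M + M) * 2^-1 ^+ k,
      (0 <= plap w x (bisect w x k).1)%E &
      (bisect w x k).2 = M \/ (plap w x (bisect w x k).2 < 0)%E].
Proof.
move=> bw; elim: k => [|k [/andP[Ma ab] bM len ge0 lt0]].
  have MM : - M <= M by move: M0; lra.
  rewrite /bisect /=; split; [by rewrite lexx MM|by []|by rewrite expr0 mulr1 opprK|
                              exact: plap_ge0_lower|by left].
rewrite /bisect iterS -/(bisect w x k) /bisect_step.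
have half : (M + M) * 2^-1 ^+ k.+1 = ((M + M) * 2^-1 ^+ k) / 2.
  by rewrite exprS mulrCA mulrC.
rewrite half -len; case: ifP => [c_ge0|/negbT c_lt0] /=.
  by split=> //; [apply/andP; split|]; lra.
by split=> //; [apply/andP; split; lra|lra|lra|right; rewrite ltNge].
Qed.

Lemma bisect_monotone w x k : (forall y, `|w y| <= M) ->
  (bisect w x k).1 <= (bisect w x k.+1).1 /\ (bisect w x k.+1).2 <= (bisect w x k).2.
Proof.
move=> bw; have [/andP[_ ab] _ _ _ _] := bisect_invariant x k bw.
by rewrite /bisect iterS -/(bisect w x k) /bisect_step; case: ifP => _ /=; split; lra.
Qed.

Definition plap_root w x : R := limn (fun k => (bisect w x k).1).

Lemma bisect_cvg w x : (forall y, `|w y| <= M) ->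
  [/\ cvgn (fun k => (bisect w x k).1),
      forall k, (bisect w x k).1 <= plap_root w x &
      forall k, plap_root w x <= (bisect w x k).2].
Proof.
move=> bw.
have nd : nondecreasing_seq (fun k => (bisect w x k).1).
  by apply/nondecreasing_seqP => k; have [] := bisect_monotone x k bw.
have ni : nonincreasing_seq (fun k => (bisect w x k).2).
  by apply/nonincreasing_seqP => k; have [] := bisect_monotone x k bw.
have cv : cvgn (fun k => (bisect w x k).1).
  apply: nondecreasing_is_cvgn => //; exists M => _ [k _ <-].
  by have [/andP[_ ab] bM _ _ _] := bisect_invariant x k bw; apply: le_trans bM.
split=> //; first exact: nondecreasing_cvgn_le.
move=> k; apply: limr_le => //; near=> n.
have [/andP[_ ab] _ _ _ _] := bisect_invariant x n bw.
by apply: le_trans ab (ni _ _ _); near: n; exact: nbhs_infty_ge.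
Unshelve. all: by end_near.
Qed.

Lemma plap_root_bound w x : (forall y, `|w y| <= M) -> `|plap_root w x| <= M.
Proof.
move=> bw; have [_ ge le] := bisect_cvg x bw.
have [/andP[Ma _] bM _ _ _] := bisect_invariant x 0 bw.
by rewrite ler_norml (le_trans Ma (ge 0%N)) (le_trans (le 0%N) bM).
Qed.

Lemma plap_root_ge0 w x : bounded_measurable M w -> (0 <= plap w x (plap_root w x))%E.
Proof.
move=> bw; have [cv _ _] := bisect_cvg x bw.2.
apply: (@plap_ge0_lim M (fun=> w) w (fun k => (bisect w x k).1)) => //.
- move=> k; have [/andP[Ma ab] bM _ _ _] := bisect_invariant x k bw.2.
  by rewrite ler_norml Ma (le_trans ab bM).
- by move=> y _; exact: cvg_cst.
- by near=> k; have [_ _ _ ge0 _] := bisect_invariant x k bw.2.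
Unshelve. all: by end_near.
Qed.

Lemma plap_gt_root_lt0 w x s : bounded_measurable M w ->
  plap_root w x < s -> s <= M -> (plap w x s < 0)%E.
Proof.
move=> bw rs sM; have [_ ge le] := bisect_cvg x bw.2.
(* some bisection interval [[a, b]] is shorter than [s - plap_root w x], so [b < s] *)
have half_lt1 : `|2^-1| < 1 :> R by rewrite ger0_norm//; lra.
have gap : 0 < s - plap_root w x by rewrite subr_gt0.
have /cvgrPdist_lt/(_ _ gap) [k _ /(_ k (leqnn k)) /=] := cvg_geometric (M + M) half_lt1.
have [/andP[Ma ab] bM len _ bM_or] := bisect_invariant x k bw.2.
rewrite /geometric sub0r normrN -len ger0_norm ?subr_ge0// => small.
case: bM_or => [bMeq|b_lt0].
  by exfalso; have := ge k; have := le k; move: rs sM bMeq small; lra.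
apply: le_lt_trans b_lt0; apply: plap_nonincreasing => //.
- by rewrite ler_norml bM (le_trans Ma ab).
- by rewrite ler_norml sM andbT (le_trans Ma) // (le_trans (ge k)) // ltW.
- by have := ge k; lra.
Qed.

Lemma plap_root_le w w' x : bounded_measurable M w -> bounded_measurable M w' ->
  (forall y, D y -> w y <= w' y) -> plap_root w x <= plap_root w' x.
Proof.
move=> bw bw' ww'; rewrite leNgt; apply/negP => lt.
have rw_bound := plap_root_bound x bw.2.
have /andP[_ rM] : - M <= plap_root w x <= M by rewrite -ler_norml.
have := le_trans (plap_root_ge0 x bw) (plap_le_datum x bw bw' rw_bound ww').
by rewrite leNgt plap_gt_root_lt0.
Qed.

Lemma measurable_bisect w k : measurable_fun setT w ->
  measurable_fun setT (fun x => (bisect w x k).1) /\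
  measurable_fun setT (fun x => (bisect w x k).2).
Proof.
move=> mw; elim: k => [|k [ma mb]]; first by split; exact: measurable_cst.
pose c x := ((bisect w x k).1 + (bisect w x k).2) / 2.
have mc : measurable_fun setT c.
  by apply: measurable_funM; [exact: measurable_funD|exact: measurable_cst].
have mcond : measurable_fun setT (fun x => (0 <= plap w x (c x))%E).
  by apply: measurable_fun_lee; [exact: measurable_cst|exact: measurable_plap].
have -> : (fun x => (bisect w x k.+1).1) =
    (fun x => if (0 <= plap w x (c x))%E then c x else (bisect w x k).1).
  by apply/funext => x; rewrite /bisect iterS /bisect_step; case: ifP.
have -> : (fun x => (bisect w x k.+1).2) =
    (fun x => if (0 <= plap w x (c x))%E then (bisect w x k).2 else c x).
  by apply/funext => x; rewrite /bisect iterS /bisect_step; case: ifP.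
by split; apply: measurable_fun_ifT.
Qed.

Lemma measurable_plap_root w : bounded_measurable M w ->
  measurable_fun setT (plap_root w).
Proof.
move=> [mw bw]; apply: (measurable_fun_cvg (h := fun k x => (bisect w x k).1)).
  by move=> k; have [] := measurable_bisect k mw.
by move=> x _; have [] := bisect_cvg x bw.
Qed.

Section iteration.
Variables (O : set X) (mO : measurable O) (psi : X -> R).
Hypothesis bpsi : bounded_measurable M psi.

Local Notation W u := (wpsi O u psi).

Lemma bounded_measurable_wpsi u : bounded_measurable M u -> bounded_measurable M (W u).
Proof.
move=> [mu bu]; split=> [|y]; last by rewrite /wpsi; case: ifP => _; [exact: bu|exact: bpsi.2].
by apply: measurable_fun_wpsi => //; apply: measurable_funTS; [exact: mu|exact: bpsi.1].
Qed.

Definition plap_iter n : X -> R := iter n (fun u => plap_root (W u)) (fun=> - M).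

Lemma bounded_measurable_plap_iter n : bounded_measurable M (plap_iter n).
Proof.
elim: n => [|n /bounded_measurable_wpsi bW].
  by split=> [|x]; [exact: measurable_cst|rewrite normrN ger0_norm].
by split=> [|x]; [exact: measurable_plap_root|exact: plap_root_bound bW.2].
Qed.

Let bW n := bounded_measurable_wpsi (bounded_measurable_plap_iter n).

Lemma plap_iter_nondecreasing x : nondecreasing_seq (fun n => plap_iter n x).
Proof.
apply/nondecreasing_seqP => n; elim: n x => [|n IH] x.
  have := (bounded_measurable_plap_iter 1).2 x.
  by rewrite ler_norml => /andP[].
change (plap_root (W (plap_iter n)) x <= plap_root (W (plap_iter n.+1)) x).
apply: (plap_root_le x (bW n) (bW n.+1)) => y _.
by rewrite /wpsi; case: ifP.
Qed.

Definition plap_sol x : R := limn (fun n => plap_iter n x).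

Lemma cvg_plap_iter x : cvgn (fun n => plap_iter n x).
Proof.
apply: nondecreasing_is_cvgn; first exact: plap_iter_nondecreasing.
exists M => _ [n _ <-]; have := (bounded_measurable_plap_iter n).2 x.
by rewrite ler_norml => /andP[].
Qed.

Lemma plap_iter_le_sol n x : plap_iter n x <= plap_sol x.
Proof. by have := nondecreasing_cvgn_le (@plap_iter_nondecreasing x) (@cvg_plap_iter x) n. Qed.

Lemma bounded_measurable_plap_sol : bounded_measurable M plap_sol.
Proof.
split.
  apply: (measurable_fun_cvg (h := plap_iter)); last by move=> x _; exact: cvg_plap_iter.
  by move=> n; exact: (bounded_measurable_plap_iter n).1.
move=> x; rewrite ler_norml; apply/andP; split.
  apply: le_trans (plap_iter_le_sol 0 x); have := (bounded_measurable_plap_iter 0).2 x.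
  by rewrite ler_norml => /andP[].
apply: limr_le; first exact: cvg_plap_iter.
by apply: nearW => n; have := (bounded_measurable_plap_iter n).2 x; rewrite ler_norml => /andP[].
Qed.

Lemma cvg_wpsi_plap_iter y : W (plap_iter n) y @[n --> \oo] --> W plap_sol y.
Proof. by rewrite /wpsi; case: ifP => _; [exact: cvg_plap_iter|exact: cvg_cst]. Qed.

Lemma plap_sol_ge0 x : (0 <= plap (W plap_sol) x (plap_sol x))%E.
Proof.
apply: (@plap_ge0_lim M (fun n => W (plap_iter n)) _ (fun n => plap_iter n x)) => //.
- by move=> n; exact: (bounded_measurable_plap_iter n).2.
- by move=> y _; exact: cvg_wpsi_plap_iter.
- exact: cvg_plap_iter.
(* [plap_iter n.+1 x] is a root for the datum of step [n] and lies above [plap_iter n x] *)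
apply: nearW => n; apply: le_trans (plap_root_ge0 x (bW n)) _.
apply: plap_nonincreasing; first exact: bW.
- exact: (bounded_measurable_plap_iter n).2.
- exact: (bounded_measurable_plap_iter n.+1).2.
- exact: plap_iter_nondecreasing x _ _ (leqnSn n).
Qed.

Lemma plap_sol_le0 x : (plap (W plap_sol) x (plap_sol x) <= 0)%E.
Proof.
have [_ bsol] := bounded_measurable_plap_sol.
apply: plap_le0_right => // [|s sol_s sM].
  exact: bounded_measurable_wpsi bounded_measurable_plap_sol.
have sM' : `|s| <= M.
  rewrite ler_norml sM andbT; have := bsol x; rewrite ler_norml => /andP[Msol _].
  by apply: le_trans Msol (ltW sol_s).
apply: (@plap_le0_lim M (fun n => W (plap_iter n)) _ (fun=> s)) => //.
- by move=> y _; exact: cvg_wpsi_plap_iter.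
- exact: cvg_cst.
apply: nearW => n; apply/ltW/plap_gt_root_lt0 => //.
exact: le_lt_trans (plap_iter_le_sol n.+1 x) sol_s.
Qed.

Theorem exists_plap_eq0 :
  exists2 u, bounded_measurable M u & forall x, plap (W u) x (u x) = 0%E.
Proof.
exists plap_sol => [|x]; first exact: bounded_measurable_plap_sol.
by apply/eqP; rewrite eq_le plap_sol_le0 plap_sol_ge0.
Qed.

End iteration.

End root.
End plap.

Definition clamp {R : realType} (M r : R) : R := Num.max (- M) (Num.min M r).

Lemma normr_clamp {R : realType} (M r : R) : 0 <= M -> `|clamp M r| <= M.
Proof.
move=> M0; rewrite ler_norml le_max lexx ge_max ge_min lexx /= andbT.
by move: M0; lra.
Qed.

Lemma clamp_id {R : realType} (M r : R) : `|r| <= M -> clamp M r = r.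
Proof. by rewrite ler_norml => /andP[Mr rM]; rewrite /clamp min_r// max_r. Qed.

Section Linf_norm.
Context {R : realType} {d : measure_display} {X : measurableType d}.
Variables (nu : {measure set X -> \bar R}) (D : set X) (u : X -> R).

Lemma Linf_norm_le (c : R) :
  {ae nu, forall x, D x -> `|u x| <= c} -> (Linf_norm nu D u <= c%:E)%E.
Proof. by move=> uc; apply: ge_ereal_inf; exists c%:E => //; apply: filterS uc. Qed.

Lemma Linf_norm_ge0 : measurable D -> nu D != 0%E -> (0 <= Linf_norm nu D u)%E.
Proof.
move=> mD nuD0; apply/ereal_infP => y [N [mN N0 DN]]; rewrite leNgt; apply/negP => y0.
(* a negative bound can only hold on a null set, so [D] would be null *)
move/eqP: nuD0; apply; apply/eqP; rewrite eq_le measure_ge0 andbT -N0.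
apply: le_measure; rewrite ?inE// => x Dx; apply: DN => /(_ Dx) uy.
by move: y0; rewrite ltNge (le_trans _ uy).
Qed.

Lemma Linf_norm_fin_num : measurable D -> nu D != 0%E ->
  (exists c : R, {ae nu, forall x, D x -> `|u x| <= c}) ->
  exists2 M : R, Linf_norm nu D u = M%:E & 0 <= M.
Proof.
move=> mD nuD0 [c uc]; have L0 := Linf_norm_ge0 mD nuD0.
have Lfin : Linf_norm nu D u \is a fin_num.
  by rewrite ge0_fin_numE// (le_lt_trans (Linf_norm_le uc)) ?ltry.
by exists (fine (Linf_norm nu D u)); rewrite ?fineK// -lee_fin fineK.
Qed.

Lemma measurable_normr_gt (M : R) : measurable D -> measurable_fun D u ->
  measurable (D `&` [set x | M < `|u x|]).
Proof.
move=> mD mu_; rewrite (_ : [set x | _] = u @^-1` (Num.norm @^-1` `]M, +oo[)).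
  by apply: mu_ => //; rewrite -[_ @^-1` _]setTI; apply: normr_measurable.
by apply/seteqP; split=> x /=; rewrite in_itv/= andbT.
Qed.

Lemma Linf_norm_gt_null (M : R) : measurable D -> measurable_fun D u ->
  Linf_norm nu D u = M%:E -> nu (D `&` [set x | M < `|u x|]) = 0%E.
Proof.
move=> mD mu_ LM; apply/negligibleP; first exact: measurable_normr_gt.
(* [|u| > M] is covered by the null sets where [|u| > M + 1 / k.+1] *)
pose F k := ~` [set x | D x -> (`|u x| <= M + k.+1%:R^-1)].
apply: (@negligibleS _ _ _ _ (\bigcup_k F k)).
  move=> x [Dx Mx]; have [k uk] := ltr_add_invr Mx.
  by exists k => //; rewrite /F /= => /(_ Dx); rewrite leNgt uk.
apply: negligible_bigcup => k.
have : (Linf_norm nu D u < (M + k.+1%:R^-1)%:E)%E by rewrite LM lte_fin ltrDl invr_gt0.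
move=> /ereal_inf_lt [y uy yM]; apply: negligibleS uy => x /= nFx uyx.
by apply: nFx => /uyx; rewrite -lee_fin => /le_trans; apply; exact: ltW.
Qed.

Lemma Linf_norm_truncate (M : R) : measurable D -> measurable_fun D u ->
  Linf_norm nu D u = M%:E -> 0 <= M ->
  exists v N, [/\ bounded_measurable M v, measurable N, nu N = 0%E &
                  forall y, D y -> ~ N y -> v y = u y].
Proof.
move=> mD mu_ LM M0; exists ((clamp M \o u) \_ D), (D `&` [set x | M < `|u x|]).
split; [|exact: measurable_normr_gt|exact: Linf_norm_gt_null|].
- split=> [|y]; last by rewrite patchE; case: ifP; rewrite ?normr0// normr_clamp.
  apply/(measurable_restrictT _ mD); apply: measurable_maxr; first exact: measurable_cst.
  by apply: measurable_minr => //; exact: measurable_cst.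
- by move=> y Dy Ny; rewrite patchE mem_set//= clamp_id// leNgt; apply/negP => ?; apply: Ny.
Qed.

End Linf_norm.

Section random_walk.
Context {R : realType} {d : measure_display} {X : measurableType d}.
Variables (m : R.-pker X ~> X) (nu : {measure set X -> \bar R}) (O : set X).
Hypothesis mO : measurable O.

Lemma measurable_mboundary : measurable (mboundary m O).
Proof.
rewrite (_ : mboundary m O = ~` O `&` ~` [set x | (m x O <= 0)%E]).
  apply: measurableI; first exact: measurableC.
  apply: measurableC; rewrite -[X in measurable X]setTI.
  by apply: measurable_lee => //; exact: measurable_kernel.
apply/seteqP; split=> x /= [Ox xO]; split=> //.
  by move=> xO0; move: xO; rewrite ltNge xO0.
by rewrite ltNge; apply/negP.
Qed.

Lemma measurable_mclosure : measurable (mclosure m O).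
Proof. exact: measurableU mO measurable_mboundary. Qed.

Lemma mclosureD : mclosure m O `\` O = mboundary m O.
Proof. by apply/seteqP; split=> x /=; [case=> -[]|case=> Ox; split; [right|]]. Qed.

Lemma mclosureI : mclosure m O `&` O = O.
Proof. by apply/seteqP; split=> x /=; [case|split=> //; left]. Qed.

Lemma measurable_fun_wpsi_mclosure (u psi : X -> R) : measurable_fun O u ->
  measurable_fun (mboundary m O) psi -> measurable_fun (mclosure m O) (wpsi O u psi).
Proof.
move=> mu mpsi; apply: measurable_fun_wpsi; rewrite ?mclosureI ?mclosureD//.
exact: measurable_mclosure.
Qed.

Lemma ae_eq_wpsi (mu : {measure set X -> \bar R}) (N : set X) (u psi psi' : X -> R)
    (F : R -> \bar R) : measurable N -> mu N = 0%E ->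
  (forall y, mboundary m O y -> ~ N y -> psi' y = psi y) ->
  ae_eq mu (mclosure m O) (F \o wpsi O u psi') (F \o wpsi O u psi).
Proof.
move=> mN muN0 psi'E; exists N; split=> // y /= ne; apply: contrapT => Ny.
apply: ne => -[Oy|By]; first by rewrite /wpsi mem_set.
by rewrite /wpsi memNset ?psi'E//; case: By.
Qed.

Lemma plap_eq0_boundary_ae (p M : R) (u psi psi' : X -> R) (N : set X) x : 1 < p ->
  bounded_measurable M u -> bounded_measurable M psi' -> measurable_fun (mboundary m O) psi ->
  measurable N -> m x N = 0%E -> (forall y, mboundary m O y -> ~ N y -> psi' y = psi y) ->
  plap m p (mclosure m O) (wpsi O u psi') x (u x) = 0%E ->
  (m x).-integrable (mclosure m O) (fun y => (phi p (wpsi O u psi y - u x))%:E) /\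
  (- plap m p (mclosure m O) (wpsi O u psi) x (u x) = 0)%E.
Proof.
move=> p1 bu bpsi' mpsi mN mxN psi'E eq0; have mOm := measurable_mclosure.
have ae := ae_eq_wpsi u (fun v => (phi p (v - u x))%:E) mN mxN psi'E.
have mf : measurable_fun (mclosure m O) (fun y => (phi p (wpsi O u psi y - u x))%:E).
  apply/measurable_EFinP; apply: measurableT_comp (measurable_phi p1) _.
  apply: measurable_funB; last exact: measurable_cst.
  by apply: measurable_fun_wpsi_mclosure => //; exact: measurable_funTS bu.1.
have i' := plap_integrable m p1 mOm x (bounded_measurable_wpsi mO bpsi' bu) (bu.2 x).
split; first exact: (integrable_ae_eq mOm ae).
rewrite /plap -(ae_eq_integral _ _ mOm (measurable_int _ i') mf ae).
by apply/eqP; rewrite oppe_eq0; apply/eqP; exact: eq0.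
Qed.

Hypothesis rev : reversible_measure m nu.

(* reversibility: [int_O m_x(N) dnu(x) = int_N m_y(O) dnu(y)] *)
Lemma reversible_integral_null (N : set X) : measurable N -> nu N = 0%E ->
  (\int[nu]_(x in O) m x N = 0)%E.
Proof.
move=> mN N0; rewrite (rev mO mN); apply: null_set_integral => //.
exact: measurable_funTS (measurable_kernel m O mO).
Qed.

Lemma reversible_ae_null (N : set X) : measurable N -> nu N = 0%E ->
  {ae nu, forall x, O x -> m x N = 0%E}.
Proof.
move=> mN N0; apply: (ae_eq_integral_abs nu mO _).1.
  exact: measurable_funTS (measurable_kernel m N mN).
rewrite -(reversible_integral_null mN N0); apply: eq_integral => x _.
by rewrite gee0_abs.
Qed.

Lemma integral_wpsi10 (p : R) x : 0 < p ->
  (\int[m x]_(y in mclosure m O) ((`|wpsi O (cst 1) (cst 0) y - 1| `^ p)%R)%:E =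
   m x (mboundary m O))%E.
Proof.
move=> p0; rewrite -[in RHS](setIidl (@subsetUr _ O (mboundary m O))).
rewrite -integral_indic; [|exact: measurable_mclosure|exact: measurable_mboundary].
apply: eq_integral => y /set_mem [Oy|By].
  rewrite /wpsi mem_set// subrr normr0 powR0 ?gt_eqF// indicE memNset//.
  by case.
rewrite /wpsi memNset; last by case: By.
by rewrite sub0r normrN normr1 powR1 indicE mem_set.
Qed.

Lemma poincare_mboundary_neq0 (p : R) : 0 < p -> (0 < nu O)%E -> (nu O < +oo)%E ->
  poincare_ineq m nu O p -> nu (mboundary m O) != 0%E.
Proof.
move=> p0 O0 Ofin [lam lam0 poinc]; apply/eqP => B0.
(* test the inequality with [u = 1] and [psi = 0]: [lam nu(O) <= int_O m_x(bd O) = 0] *)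
have one_p : (\int[nu]_(x in O) ((`|cst 1 x| `^ p)%R)%:E = nu O)%E.
  transitivity (\int[nu]_(x in O) (cst 1%E x))%E; last by rewrite integral_cst// mul1e.
  by apply: eq_integral => x _; rewrite /= normr1 powR1.
have zero_p : (\int[nu]_(x in mboundary m O) ((`|cst 0 x| `^ p)%R)%:E = 0)%E.
  transitivity (\int[nu]_(x in mboundary m O) (cst 0%E x))%E; last exact: integral0.
  by apply: eq_integral => x _; rewrite /= normr0 powR0 ?gt_eqF.
have L1 : Lp_on nu O p (cst 1) by split; [exact: measurable_cst|rewrite one_p].
have L0 : Lp_on nu (mboundary m O) p (cst 0).
  by split; [exact: measurable_cst|rewrite zero_p].
have := poinc _ _ L1 L0; rewrite one_p zero_p adde0.
under eq_integral do rewrite integral_wpsi10//.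
rewrite (reversible_integral_null measurable_mboundary B0) => le0.
have : (0 < lam%:E * nu O)%E by rewrite mule_gt0// lte_fin.
by rewrite ltNge le0.
Qed.

End random_walk.

Unset Implicit Arguments.

Theorem mainTheorem5 (R : realType) (d : measure_display) (X : measurableType d)
  (dist : X -> X -> R) (m : R.-pker X ~> X) (nu : {measure set X -> \bar R}) :
  metric_random_walk_space dist m ->
  invariant_measure m nu ->
  reversible_measure m nu ->
  sigma_finite setT nu ->
  (nu setT < +oo)%E ->
  ergodic_measure m nu ->
  forall (O : set X), measurable O -> dbounded dist O ->
  (0 < nu O)%E -> (nu O < nu setT)%E ->
  forall (psi : X -> R), Linf_on nu (mboundary m O) psi ->
  forall (p : R), 1 < p ->
  poincare_ineq m nu O p ->
  exists u : X -> R,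
    [/\ Lp_on nu O p u,
        {ae nu, forall x, O x ->
           (m x).-integrable (mclosure m O)
              (fun y => ((`|wpsi O u psi y - u x| `^ (p - 2)) * (wpsi O u psi y - u x))%:E)
           /\ (- (\int[m x]_(y in mclosure m O)
                ((`|wpsi O u psi y - u x| `^ (p - 2)) * (wpsi O u psi y - u x))%:E) = 0)%E}
      & (Linf_norm nu O u <= Linf_norm nu (mboundary m O) psi)%E].
Proof.
move=> _ _ rev _ nuT_fin _ O mO _ O0 _ psi [mpsi psi_ess] p p1 poinc.
have mB := measurable_mboundary m mO.
have Ofin : (nu O < +oo)%E by apply: le_lt_trans nuT_fin; rewrite le_measure ?inE.
have B0 := poincare_mboundary_neq0 mO rev (lt_trans ltr01 p1) O0 Ofin poinc.
have [M LM M0] := Linf_norm_fin_num mB B0 psi_ess.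
have [psiM [N [bpsiM mN N0 psiME]]] := Linf_norm_truncate mB mpsi LM M0.
have [u bu hu] := exists_plap_eq0 m p1 (measurable_mclosure m mO) M0 mO bpsiM.
exists u; split.
- apply: (bounded_Lp_on mO Ofin); [exact: ltW (lt_trans ltr01 p1)|
                                    exact: measurable_funTS bu.1|by move=> x _; exact: bu.2].
- apply: filterS (reversible_ae_null mO rev mN N0) => x + Ox => /(_ Ox) mxN.
  exact (plap_eq0_boundary_ae mO p1 bu bpsiM mpsi mN mxN psiME (hu x)).
- apply: le_trans (Linf_norm_le (c := M) _) _; last by rewrite LM.
  by apply: aeW => x _; exact: bu.2.
Qed.
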